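(* Let $G$ be a finite connected graph with at least one edge and let $\phi$ be an order map for $G$. Then $\phi$ is tree-compatible if and only if for all spanning trees $T,T'$ of $G$ and every $k\in\{0,\dots,|E(G)|-1\}$, $$T\cap\{\phi_1(T),\dots,\phi_k(T)\}=T'\cap\{\phi_1(T),\dots,\phi_k(T)\}\ \Longrightarrow\ \forall j\in\{1,\dots,k+1\},\ \phi_j(T)=\phi_j(T').$$
   Context: An order map assigns to each spanning tree $T$ of $G$ a total order $\phi(T)$ on $E(G)$; $\phi_k(T)$ denotes the $k$-th smallest edge for $\phi(T)$. Let $m=|E(G)|$. A decision tree is a perfect binary tree of depth $m-1$ whose nodes are labelled by edges of $G$ so that along every root-to-leaf path the labels form a permutation of $E(G)$. For a spanning tree $T$, walk down the decision tree from the root: at each node, if its label is not in $T$ go to the left child, otherwise go to the right child; the sequence of labels $e_1,\dots,e_m$ met defines the $(\Delta,T)$-ordering $e_1<\dots<e_m$. The order map $\phi$ is tree-compatible if there exists a decision tree $\Delta$ such that for every spanning tree $T$ the $(\Delta,T)$-ordering coincides with $\phi(T)$. *)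

From mathcomp Require Import all_boot.
Set Implicit Arguments. Unset Strict Implicit. Unset Printing Implicit Defensive.

(* A finite (multi)graph: vertex type V, edge type E, each edge has two
   endpoints (ends e).  Loops and parallel edges are allowed. *)
Section Graphs.
Variables (V E : finType) (ends : E -> V * V).

Definition adj (F : {set E}) : rel V :=
  fun x y => [exists e in F, (ends e == (x, y)) || (ends e == (y, x))].

Definition spanning_connected (F : {set E}) : Prop :=
  forall x y : V, connect (adj F) x y.

Definition connected_graph : Prop := spanning_connected setT.

(* (V, F) is acyclic: no edge of F lies on a cycle of F, i.e. no edge e of F
   has its endpoints connected in F minus e (loops are cycles). *)
Definition acyclic (F : {set E}) : Prop :=
  forall e, e \in F -> ~~ connect (adj (F :\ e)) (ends e).1 (ends e).2.

Definition spanning_tree (T : {set E}) : Prop :=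
  spanning_connected T /\ acyclic T.

(* an order map: to every spanning tree a total order on E(G), given as the
   list (phi_1(T), ..., phi_m(T)) of all edges in increasing order
   (index j : 'I_m is 0-based, so tnth (phi T) j = phi_{j+1}(T)). *)
Definition order_map (phi : {set E} -> #|E|.-tuple E) : Prop :=
  forall T, spanning_tree T -> uniq (phi T).

Inductive dtree := DLeaf of E | DNode of E & dtree & dtree.

Fixpoint perfect (d : nat) (t : dtree) : bool :=
  match t, d with
  | DLeaf _, 0 => true
  | DNode _ l r, d'.+1 => perfect d' l && perfect d' r
  | _, _ => false
  end.

Fixpoint dpaths (t : dtree) : seq (seq E) :=
  match t with
  | DLeaf e => [:: [:: e]]
  | DNode e l r => [seq e :: p | p <- dpaths l ++ dpaths r]
  end.

Definition decision_tree (t : dtree) : Prop :=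
  perfect #|E|.-1 t /\ forall p, p \in dpaths t -> perm_eq p (enum E).

Fixpoint dwalk (t : dtree) (T : {set E}) : seq E :=
  match t with
  | DLeaf e => [:: e]
  | DNode e l r => e :: dwalk (if e \in T then r else l) T
  end.

Definition tree_compatible (phi : {set E} -> #|E|.-tuple E) : Prop :=
  exists D : dtree, decision_tree D /\
    forall T, spanning_tree T -> dwalk D T = val (phi T).

End Graphs.

From mathcomp Require Import all_boot.
Set Implicit Arguments. Unset Strict Implicit. Unset Printing Implicit Defensive.

(* If phi comes from a decision tree, the first k+1 edges of phi(T) are
   determined by which of the first k edges lie in T, which gives the
   condition. Conversely, under the condition the next edge phi_{k+1}(T) is a
   function of the trace (phi_1(T), [phi_1(T) \in T]), ..., (phi_k(T),
   [phi_k(T) \in T]). Label every node of a perfect tree by this function of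
   the trace of decisions leading to it (by any unused edge if no spanning
   tree has that trace); walking the tree with T then reproduces phi(T), and
   since phi(T) has no repetitions, no label repeats along a path, so every
   root-to-leaf path is a permutation of E. *)

Lemma nth_notin_take (T : eqType) (x0 : T) (s : seq T) i :
  uniq s -> i < size s -> nth x0 s i \notin take i s.
Proof.
rewrite -{1}(cat_take_drop i s) cat_uniq => /and3P[_ /hasPn take_drop_disj _] lt_i.
by apply: take_drop_disj; rewrite (drop_nth x0 lt_i) mem_head.
Qed.

Lemma mem_prefix_set (T : finType) n (t : n.-tuple T) k x :
  k <= n -> (x \in [set tnth t i | i : 'I_n & i < k]) = (x \in take k t).
Proof.
move=> le_kn; apply/imsetP/idP => [[i] | x_in].
  rewrite inE => lt_ik ->; rewrite (tnth_nth x) -(nth_take x lt_ik).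
  by rewrite mem_nth // size_takel ?size_tuple.
have lt_xk : index x (take k t) < k.
  by have := index_mem x (take k t); rewrite size_takel ?size_tuple // x_in.
have [i lt_ik ->] : exists2 i, i < k & x = nth x t i.
  by exists (index x (take k t)); rewrite // -(nth_take x lt_xk) nth_index.
have lt_in : i < n by apply: leq_trans le_kn.
by exists (Ordinal lt_in); rewrite ?inE ?(tnth_nth x).
Qed.

Lemma dwalk_take (E : finType) (D : dtree E) (T T' : {set E}) n :
  {in take n (dwalk D T), forall x, (x \in T) = (x \in T')} ->
  take n.+1 (dwalk D T) = take n.+1 (dwalk D T').
Proof.
elim: D n => [// | e l IHl r IHr [|n] same_in /=]; rewrite ?take0 //; congr (_ :: _).
have -> : (e \in T') = (e \in T) by rewrite same_in ?mem_head.
by case e_in: (e \in T); [apply: IHr | apply: IHl] => x x_in;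
  apply: same_in; rewrite /= e_in in_cons x_in orbT.
Qed.

Section Graph.
Variables (V E : finType) (ends : E -> V * V).

Definition spanning_treeb (T : {set E}) : bool :=
  [forall x, forall y, connect (adj ends T) x y] &&
  [forall e in T, ~~ connect (adj ends (T :\ e)) (ends e).1 (ends e).2].

Lemma spanning_treeP T : reflect (spanning_tree ends T) (spanning_treeb T).
Proof.
apply: (iffP andP) => [[/forallP conn /forallP acyc] | [conn acyc]]; split.
- by move=> x y; exact: (forallP (conn x) y).
- by move=> e e_in; move/implyP: (acyc e); apply.
- by apply/forallP => x; apply/forallP => y; apply: conn.
- by apply/forallP => e; apply/implyP; apply: acyc.
Qed.

Variable phi : {set E} -> #|E|.-tuple E.

Definition trace (T : {set E}) n : seq (E * bool) :=
  [seq (x, x \in T) | x <- take n (phi T)].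

Lemma trace_edges T n : map fst (trace T n) = take n (phi T).
Proof. by rewrite -map_comp map_id. Qed.

Lemma size_trace T n : n <= #|E| -> size (trace T n) = n.
Proof. by move=> le_n; rewrite size_map size_takel ?size_tuple. Qed.

Lemma trace_rcons x0 T n : n < #|E| ->
  trace T n.+1 = rcons (trace T n) (nth x0 (phi T) n, nth x0 (phi T) n \in T).
Proof. by move=> lt_n; rewrite /trace (take_nth x0) ?size_tuple // map_rcons. Qed.

Definition prefix_condition : Prop :=
  forall T T' : {set E}, spanning_tree ends T -> spanning_tree ends T' ->
  forall k : 'I_#|E|,
    let P := [set tnth (phi T) i | i : 'I_#|E| & i < k] in
    T :&: P = T' :&: P ->
    forall j : 'I_#|E|, j <= k -> tnth (phi T) j = tnth (phi T') j.

Definition trace_determined : Prop :=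
  forall (T T' : {set E}) (x0 : E) n, spanning_tree ends T -> spanning_tree ends T' ->
  n < #|E| -> trace T n = trace T' n -> nth x0 (phi T) n = nth x0 (phi T') n.

Lemma prefix_condition_trace_determined : prefix_condition -> trace_determined.
Proof.
move=> cond T T' x0 n tT tT' lt_n same_trace.
have := cond T T' tT tT' (Ordinal lt_n) _ (Ordinal lt_n) (leqnn n).
rewrite !(tnth_nth x0); apply; apply/setP => x; rewrite !inE.
rewrite mem_prefix_set ?(ltnW lt_n) //.
case x_in: (x \in take n (phi T)); rewrite ?andbF ?andbT //.
have : (x, x \in T) \in trace T' n by rewrite -same_trace map_f.
by case/mapP => y _ [-> ->].
Qed.

Variable e0 : E.

Lemma tree_compatible_prefix_condition : tree_compatible ends phi -> prefix_condition.
Proof.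
case=> D [_ phiD] T T' tT tT' k /= same_in j le_jk; rewrite !(tnth_nth e0) -!phiD //.
rewrite -(nth_take _ (le_jk : j < k.+1)) -[RHS](nth_take _ (le_jk : j < k.+1)).
congr nth; apply: dwalk_take => x x_in; rewrite phiD // in x_in.
have x_P : x \in [set tnth (phi T) i | i : 'I_#|E| & i < k] by rewrite mem_prefix_set // ltnW.
by move/setP/(_ x): same_in; rewrite !inE x_P !andbT.
Qed.

Definition fresh (L : seq E) : E := odflt e0 [pick x | x \notin L].

Lemma fresh_notin L : size L < #|E| -> fresh L \notin L.
Proof.
rewrite /fresh; case: pickP => //= all_in lt_L.
have sub_L : {subset enum E <= L} by move=> x _; apply/negbFE/all_in.
by have := uniq_leq_size (enum_uniq E) sub_L; rewrite -cardE leqNgt lt_L.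
Qed.

Definition follows (T : {set E}) (h : seq (E * bool)) : bool :=
  spanning_treeb T && (h == trace T (size h)).

Definition next_edge (h : seq (E * bool)) : E :=
  if [pick T | follows T h] is Some T0 then nth e0 (phi T0) (size h)
  else fresh (map fst h).

Fixpoint build (d : nat) (h : seq (E * bool)) : dtree E :=
  let e := next_edge h in
  if d is d'.+1 then DNode e (build d' (rcons h (e, false))) (build d' (rcons h (e, true)))
  else DLeaf e.

Lemma perfect_build d h : perfect d (build d h).
Proof. by elim: d h => [|d IH] h //=; rewrite !IH. Qed.

Hypothesis phi_order : order_map ends phi.

Lemma next_edge_notin h : size h < #|E| -> next_edge h \notin map fst h.
Proof.
rewrite /next_edge => lt_h; case: pickP => [T0 /andP[/spanning_treeP tT0 /eqP h_eq] | _].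
  by rewrite {2}h_eq trace_edges nth_notin_take ?phi_order ?size_tuple.
by apply: fresh_notin; rewrite size_map.
Qed.

Lemma dpaths_build d h p : uniq (map fst h) -> size h + d < #|E| ->
  p \in dpaths (build d h) -> uniq (map fst h ++ p) /\ size p = d.+1.
Proof.
elim: d h p => [|d IH] h p uniq_h lt_hd /=;
  have fresh_e := next_edge_notin (leq_ltn_trans (leq_addr _ _) lt_hd).
  by rewrite mem_seq1 => /eqP ->; rewrite cat_uniq /= uniq_h orbF fresh_e.
rewrite map_cat mem_cat => /orP[] /mapP[q q_in ->];
  [have := IH (rcons h (next_edge h, false)) q | have := IH (rcons h (next_edge h, true)) q];
  rewrite map_rcons rcons_uniq fresh_e uniq_h size_rcons addSnnS cat_rcons;
  by case/(_ isT lt_hd q_in) => -> /= ->.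
Qed.

Hypothesis phi_determined : trace_determined.

Lemma next_edge_trace T n : spanning_tree ends T -> n < #|E| ->
  next_edge (trace T n) = nth e0 (phi T) n.
Proof.
move=> tT lt_n; have le_n := ltnW lt_n; rewrite /next_edge size_trace //.
case: pickP => [T0 /andP[/spanning_treeP tT0] | none]; last first.
  by have := none T; rewrite /follows size_trace // eqxx andbT => /spanning_treeP.
by rewrite size_trace // => /eqP same_trace; apply: phi_determined.
Qed.

Lemma dwalk_build T d n : spanning_tree ends T -> n + d.+1 = #|E| ->
  dwalk (build d (trace T n)) T = drop n (phi T).
Proof.
move=> tT; elim: d n => [|d IH] n sz_n;
  have lt_n : n < #|E| by rewrite -sz_n addnS ltnS leq_addr.
  rewrite /= next_edge_trace // (drop_nth e0) ?size_tuple //.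
  by rewrite drop_oversize // size_tuple -sz_n addn1.
rewrite /= next_edge_trace // [RHS](drop_nth e0) ?size_tuple //; set x := nth e0 _ n.
have -> : (if x \in T then build d (rcons (trace T n) (x, true))
           else build d (rcons (trace T n) (x, false))) = build d (trace T n.+1).
  by rewrite (trace_rcons e0) //; case: (x \in T).
by rewrite IH // addSnnS.
Qed.

Lemma build_decision_tree : 0 < #|E| -> decision_tree (build #|E|.-1 [::]).
Proof.
move=> E_gt0; split; first exact: perfect_build.
move=> p p_in; have lt_d : size (@nil (E * bool)) + #|E|.-1 < #|E| by rewrite prednK.
have [uniq_p size_p] := dpaths_build (h := [::]) isT lt_d p_in.
rewrite prednK // in size_p; apply: uniq_perm; rewrite ?enum_uniq //.
by have [] := uniq_min_size uniq_p (fun x _ => mem_enum _ x); rewrite ?size_p -?cardE.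
Qed.

Lemma build_tree_compatible : 0 < #|E| -> tree_compatible ends phi.
Proof.
move=> E_gt0; exists (build #|E|.-1 [::]); split; first exact: build_decision_tree.
move=> T tT; have := @dwalk_build T #|E|.-1 0 tT.
by rewrite /trace take0 drop0 add0n prednK //; apply.
Qed.

End Graph.

Theorem theorem12p6p1 (V E : finType) (ends : E -> V * V)
  (phi : {set E} -> #|E|.-tuple E) :
  connected_graph ends -> 0 < #|E| -> order_map ends phi ->
  (tree_compatible ends phi <->
   forall T T' : {set E}, spanning_tree ends T -> spanning_tree ends T' ->
   forall k : 'I_#|E|,
     let P := [set tnth (phi T) i | i : 'I_#|E| & i < k] in
     T :&: P = T' :&: P ->
     forall j : 'I_#|E|, j <= k -> tnth (phi T) j = tnth (phi T') j).
Proof.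
move=> _ E_gt0 phi_order; have e0 : E := enum_val (Ordinal E_gt0).
split => [compat | cond]; first exact: tree_compatible_prefix_condition.
exact: build_tree_compatible e0 phi_order (prefix_condition_trace_determined cond) E_gt0.
Qed.
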